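(* Let $\Sigma$ be a predictive theory and $A \Rightarrow B$ a predictive formula. Put $\Sigma_{A}^B = \{E+i \Rightarrow F+i \mid E \Rightarrow F \in \Sigma,\ i \in \mathbb{Z},\ l(A)-l(E) \leq i \leq u(B)-l(F)\}$. Then $\Sigma \vdash A \Rightarrow B$ if and only if $\Sigma_{A}^B \vdash_\mathcal{R} A \Rightarrow B$, where $\mathcal{R}$ is the deduction system consisting of (Ax) and (Cut).
   Context: $Y$ is a non-empty finite set of attributes and $\mathcal{T}_Y = \{y^i \mid y \in Y, i \in \mathbb{Z}\}$; $M + j = \{y^{i+j} \mid y^i \in M\}$. A formula is $A \Rightarrow B$ with $A,B$ finite subsets of $\mathcal{T}_Y$; a theory is a set of formulas. For finite non-empty $M \subseteq \mathcal{T}_Y$, $l(M) = \min\{i \mid y^i \in M\}$ and $u(M) = \max\{i \mid y^i \in M\}$. A formula $A \Rightarrow B$ is predictive if $A \neq \emptyset$, $B \neq \emptyset$ and $i \leq j$ for all $x^i \in A$, $y^j \in B$ (equivalently $u(A) \le l(B)$); a theory is predictive if all its formulas are. Deduction rules (for arbitrary finite $A,B,C,D \subseteq \mathcal{T}_Y$, $i \in \mathbb{Z}$): (Ax) infer $A \cup B \Rightarrow A$; (Cut) from $A \Rightarrow B$ and $B \cup C \Rightarrow D$ infer $A \cup C \Rightarrow D$; (Shf) from $A \Rightarrow B$ infer $A+i \Rightarrow B+i$. For a set of rules $\mathcal{R}$, $\Sigma \vdash_\mathcal{R} A \Rightarrow B$ means there is a finite sequence ending with $A \Rightarrow B$ each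 member of which is in $\Sigma$ or follows from earlier members by a rule of $\mathcal{R}$; $\vdash$ denotes $\vdash_\mathcal{R}$ for $\mathcal{R}$ = \{(Ax), (Cut), (Shf)\}. *)

From HB Require Import structures.
From mathcomp Require Import all_boot all_order all_algebra.
From mathcomp Require Import finmap.
Set Implicit Arguments. Unset Strict Implicit. Unset Printing Implicit Defensive.
Import Order.TTheory GRing.Theory Num.Theory.
Local Open Scope fset_scope.
Local Open Scope ring_scope.

(* Temporal attributes y^i are pairs (y, i) : Y * int; finite subsets of T_Y
   are finite sets {fset (Y * int)}. *)
Section Defs.
Variable Y : finType.

Definition tattr := (Y * int)%type.
Definition fmla := ({fset tattr} * {fset tattr})%type.  (* (A, B) is A => B *)
Definition theory := fmla -> Prop.

Definition shift (M : {fset tattr}) (j : int) : {fset tattr} :=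
  [fset (x.1, x.2 + j) | x in M].

(* l(M) and u(M) (meaningful for non-empty M) *)
Definition lo (M : {fset tattr}) : int :=
  let s := [seq x.2 | x <- M] in foldr Num.min (head 0 s) s.
Definition up (M : {fset tattr}) : int :=
  let s := [seq x.2 | x <- M] in foldr Num.max (head 0 s) s.

Definition predictive_fmla (f : fmla) : Prop :=
  f.1 != fset0 /\ f.2 != fset0 /\
  (forall x y, x \in f.1 -> y \in f.2 -> x.2 <= y.2).

Definition predictive_theory (S : theory) : Prop :=
  forall f, S f -> predictive_fmla f.

(* Provability from S using (Ax), (Cut), and (Shf) iff [shf = true]. *)
Inductive derives (shf : bool) (S : theory) : fmla -> Prop :=
| d_hyp f : S f -> derives shf S f
| d_ax (A B : {fset tattr}) : derives shf S (A `|` B, A)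
| d_cut (A B C D : {fset tattr}) :
    derives shf S (A, B) -> derives shf S (B `|` C, D) -> derives shf S (A `|` C, D)
| d_shf (A B : {fset tattr}) (i : int) :
    shf -> derives shf S (A, B) -> derives shf S (shift A i, shift B i).

Definition restrict_theory (S : theory) (A B : {fset tattr}) : theory :=
  fun f => exists (E F : {fset tattr}) (i : int),
    S (E, F) /\ lo A - lo E <= i /\ i <= up B - lo F /\
    f = (shift E i, shift F i).
End Defs.

From HB Require Import structures.
From mathcomp Require Import all_boot all_order all_algebra.
From mathcomp Require Import finmap zify.
Set Implicit Arguments. Unset Strict Implicit. Unset Printing Implicit Defensive.
Import Order.TTheory GRing.Theory Num.Theory.
Local Open Scope fset_scope.
Local Open Scope ring_scope.

(* Without (Shf), A => B is derivable exactly when every attribute of B lies in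
   the closure of A under the formulas of the theory.  A derivation from Sigma
   with (Shf) can be replaced by one without (Shf) from all shifts of Sigma.
   In the closure of A under the shifts of a predictive theory every time index
   is at least l(A), since a rule E+i => F+i fires only once the elements of
   E+i are derived; and an attribute with index at most u(B) is reached using
   only rules with l(F)+i <= u(B), because the premises of a predictive rule
   come no later than its conclusions.  These are exactly the rules of
   Sigma_A^B. *)

Section Derivations.
Variable Y : finType.
Implicit Types (G : theory Y) (A B C E F : {fset tattr Y}).

Lemma derives_weaken b G A B C : derives b G (A, B) -> C `<=` B ->
  derives b G (A, C).
Proof.
move=> dAB /fsetUidPr CB.
have dBC : derives b G (B `|` fset0, C) by rewrite fsetU0 -{1}CB; exact: d_ax.
by have := d_cut dAB dBC; rewrite fsetU0.
Qed.

Lemma derives_refl b G A : derives b G (A, A).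
Proof. by have := d_ax b G A fset0; rewrite fsetU0. Qed.

Lemma derives_fset0 b G A : derives b G (A, fset0).
Proof. by have := d_ax b G fset0 A; rewrite fset0U. Qed.

Lemma derives_fsetU b G A B C : derives b G (A, B) -> derives b G (A, C) ->
  derives b G (A, B `|` C).
Proof.
move=> dAB dAC.
have dCB : derives b G (C `|` B, B `|` C) by rewrite fsetUC; exact: derives_refl.
have := d_cut dAC dCB; rewrite fsetUC => dBA.
by have := d_cut dAB dBA; rewrite fsetUid.
Qed.

Lemma derives_fset1P b G A B :
  (forall x, x \in B -> derives b G (A, [fset x])) -> derives b G (A, B).
Proof.
elim/fset1U_rect: B => [|x B _ IH] dx; first exact: derives_fset0.
apply: derives_fsetU; first by apply: dx; rewrite fset1U1.
by apply: IH => y yB; apply: dx; rewrite fset1Ur.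
Qed.

Inductive closure G A : tattr Y -> Prop :=
| closure_base x : x \in A -> closure G A x
| closure_rule E F x : G (E, F) -> (forall e, e \in E -> closure G A e) ->
    x \in F -> closure G A x.

Definition closed_under G (P : tattr Y -> Prop) :=
  forall E F, G (E, F) -> (forall e, e \in E -> P e) -> forall x, x \in F -> P x.

Lemma closure_derives b G A x : closure G A x -> derives b G (A, [fset x]).
Proof.
elim=> {x} [x xA|E F x GEF _ dE xF].
  by apply: derives_weaken (derives_refl b G A) _; rewrite fsub1set.
have dEF : derives b G (E `|` fset0, F) by rewrite fsetU0; exact: d_hyp.
have := d_cut (derives_fset1P dE) dEF; rewrite fsetU0 => dAF.
by apply: derives_weaken dAF _; rewrite fsub1set.
Qed.

Lemma derives_closed G f P : derives false G f -> closed_under G P ->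
  (forall a, a \in f.1 -> P a) -> forall x, x \in f.2 -> P x.
Proof.
elim=> {f} [[E F] GEF|A' B'|A' B' C' D' _ IH1 _ IH2|//] closedP /= PA.
- exact: closedP GEF PA.
- by move=> x xA; apply: PA; rewrite in_fsetU xA.
- apply: IH2 => // c; rewrite in_fsetU => /orP [cB|cC].
    by apply: IH1 => // a aA; apply: PA; rewrite in_fsetU aA.
  by apply: PA; rewrite in_fsetU cC orbT.
Qed.

Lemma derives_closureE G A B :
  derives false G (A, B) <-> forall x, x \in B -> closure G A x.
Proof.
split=> [dAB|clB]; last first.
  by apply: derives_fset1P => x /clB; exact: closure_derives.
apply: (derives_closed dAB); last exact: closure_base.
by move=> E F GEF clE x; exact: closure_rule GEF clE.
Qed.

End Derivations.

Section Shifts.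
Variable Y : finType.
Implicit Types (S : theory Y) (A B E F M : {fset tattr Y}).

Lemma mem_shift M i x : x \in M -> (x.1, x.2 + i) \in shift M i.
Proof. by move=> xM; apply/imfsetP; exists x. Qed.

Lemma shiftP M i x : x \in shift M i -> exists2 y, y \in M & x = (y.1, y.2 + i).
Proof. by move=> /imfsetP [/= y yM ->]; exists y. Qed.

Lemma shiftU M1 M2 i : shift (M1 `|` M2) i = shift M1 i `|` shift M2 i.
Proof. exact: imfsetU. Qed.

Lemma shiftD M i j : shift (shift M i) j = shift M (i + j).
Proof.
apply/fsetP => x; apply/imfsetP/imfsetP => [|[/= z zM ->]].
  by case=> /= _ /shiftP [z zM ->] ->; exists z; rewrite //= addrA.
by exists (z.1, z.2 + i); [apply/imfsetP; exists z | rewrite /= addrA].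
Qed.

Lemma shift0 M : shift M 0 = M.
Proof.
apply/fsetP => x; apply/imfsetP/idP => [[/= y yM ->]|xM].
  by rewrite addr0 -surjective_pairing.
by exists x => //; rewrite addr0 -surjective_pairing.
Qed.

Definition all_shifts S : theory Y :=
  fun f => exists E F (i : int), S (E, F) /\ f = (shift E i, shift F i).

Lemma derives_shift_all_shifts S f i : derives true S f ->
  derives false (all_shifts S) (shift f.1 i, shift f.2 i).
Proof.
move=> df; elim: df i => {f} [[E F] SEF|A' B'|A' B' C' D' _ IH1 _ IH2|A' B' j _ _ IH] i /=.
- by apply: d_hyp; exists E, F, i.
- by rewrite shiftU; exact: d_ax.
- by rewrite shiftU; apply: d_cut (IH1 i) _; rewrite -shiftU; exact: IH2.
- by rewrite !shiftD; exact: IH.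
Qed.

Lemma derives_all_shifts S A B : derives true S (A, B) ->
  derives false (all_shifts S) (A, B).
Proof. by move=> /(derives_shift_all_shifts 0); rewrite /= !shift0. Qed.

Lemma restrict_theory_derives S A B f :
  derives false (restrict_theory S A B) f -> derives true S f.
Proof.
elim=> {f} [f [E [F [i [SEF [_ [_ ->]]]]]]|A' B'|A' B' C' D' _ IH1 _ IH2|//].
- by apply: d_shf => //; exact: d_hyp.
- exact: d_ax.
- exact: d_cut IH1 IH2.
Qed.

End Shifts.

Section Bounds.
Variables (d : Order.disp_t) (T : orderType d).
Implicit Types (s : seq T) (z y : T).

Lemma foldr_min_le s z y : y \in z :: s -> (foldr Order.min z s <= y)%O.
Proof.
elim: s => [|a s IH] /=; first by rewrite inE => /eqP ->.
move=> ys; rewrite ge_min; have [->|ya] := eqVneq y a; first by rewrite lexx.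
by rewrite IH ?orbT //; move: ys; rewrite !inE (negPf ya).
Qed.

Lemma foldr_max_ge s z y : y \in z :: s -> (y <= foldr Order.max z s)%O.
Proof.
elim: s => [|a s IH] /=; first by rewrite inE => /eqP ->.
move=> ys; rewrite le_max; have [->|ya] := eqVneq y a; first by rewrite lexx.
by rewrite IH ?orbT //; move: ys; rewrite !inE (negPf ya).
Qed.

Lemma foldr_min_mem s z : foldr Order.min z s \in z :: s.
Proof.
elim: s => [|a s IH] /=; first exact: mem_head.
rewrite /Order.min; case: ifP => _; first by rewrite !inE eqxx orbT.
by move: IH; rewrite !inE => /orP [->|->]; rewrite ?orbT.
Qed.

End Bounds.

Section Predictive.
Variable Y : finType.
Implicit Types (S : theory Y) (A B E F M : {fset tattr Y}).

Lemma lo_le M x : x \in M -> lo M <= x.2.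
Proof. by move=> xM; apply: foldr_min_le; rewrite inE map_f ?orbT. Qed.

Lemma up_ge M x : x \in M -> x.2 <= up M.
Proof. by move=> xM; apply: foldr_max_ge; rewrite inE map_f ?orbT. Qed.

Lemma lo_mem M : M != fset0 -> exists2 x, x \in M & x.2 = lo M.
Proof.
rewrite /lo; case/fset0Pn => y yM.
case def_s: [seq x.2 | x <- M] => [|a s].
  by have := map_f (fun x : tattr Y => x.2) yM; rewrite def_s.
have lo_in : foldr Num.min a (a :: s) \in a :: s.
  by have := foldr_min_mem (a :: s) a; rewrite inE => /orP [/eqP ->|]; rewrite ?mem_head.
have /mapP [x xM ->] : foldr Num.min a (a :: s) \in [seq x.2 | x <- M] by rewrite def_s.
by exists x.
Qed.

Variables (S : theory Y) (A : {fset tattr Y}).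
Hypothesis predS : predictive_theory S.

Lemma closure_all_shifts_lo x : closure (all_shifts S) A x -> lo A <= x.2.
Proof.
elim=> {x} [x xA|_ _ x [E [F [i [SEF [-> ->]]]]] _ IH /shiftP [y yF ->] /=].
  exact: lo_le.
have [/= nE [_ EF]] := predS SEF.
have [e eE eE_lo] := lo_mem nE.
have := IH _ (mem_shift i eE); have := EF _ _ eE yF; rewrite /= eE_lo; lia.
Qed.

Lemma closure_all_shifts_restrict B x : closure (all_shifts S) A x ->
  x.2 <= up B -> closure (restrict_theory S A B) A x.
Proof.
elim=> {x} [x xA _|_ _ x [E [F [i [SEF [-> ->]]]]] clE IH /shiftP [y yF ->] /= yB].
  exact: closure_base.
have [/= nE [_ EF]] := predS SEF.
have [e eE eE_lo] := lo_mem nE.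
apply: (@closure_rule _ _ _ (shift E i) (shift F i)); last exact: mem_shift.
- exists E, F, i; split=> //; split; last split=> //.
    by have := closure_all_shifts_lo (clE _ (mem_shift i eE)); rewrite /= eE_lo; lia.
  by rewrite lerBrDr addrC (le_trans _ yB) // lerD2r lo_le.
- move=> _ /shiftP [z zE ->]; apply: IH; first exact: mem_shift.
  by have := EF _ _ zE yF; rewrite /=; lia.
Qed.

End Predictive.

Theorem theorem14 (Y : finType) (hY : (0 < #|Y|)%N) (S : theory Y)
    (A B : {fset tattr Y}) :
  predictive_theory S -> predictive_fmla (A, B) ->
  (derives true S (A, B) <-> derives false (restrict_theory S A B) (A, B)).
Proof.
move=> predS _; split; last exact: restrict_theory_derives.
move=> /derives_all_shifts /derives_closureE clB.
apply/derives_closureE => x xB.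
by apply: (closure_all_shifts_restrict predS (clB x xB)); exact: up_ge.
Qed.
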